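(* If $\mathsf{B}\in\mathbb{R}$ and $\alpha<\rho(\mathsf{B})$ is an ordinal, then there is an $\mathsf{A}\in\mathbb{R}$ such that $\mathsf{A}\le\mathsf{B}$ and $\rho(\mathsf{A})=\alpha$.
   Context: Standard generating sets: $\mathrm{Homeo}_+(I)$ acts on $I=[0,1]$ on the right. Support $\mathrm{supt}(f)=\{t:tf\ne t\}$; extended support = interior of its closure; orbitals = components of the support, endpoints = transition points; a bump has exactly one orbital, positive if $tf>t$ there, else negative. A marking assigns to each bump $b$ with support $(u,v)$ a point $s_b\in(u,v)$; feet of $b$: $(u,s_b)$ and $[t_b,v)$ with $t_b=s_bb$ ($b$ positive) or $s_bb^{-1}$ ($b$ negative). A marked function has finitely many bumps, each marked. A finite set of marked functions is fast if no bump occurs in two of its elements and distinct bumps have disjoint feet. A standard function is a marked function whose extended support is an interval, with all positive bumps right of all negative bumps, and #positive $-$ #negative bumps $\in\{0,1\}$. For standard $f,g$: $f\ll g$ iff extended supports disjoint with $f$'s to the left; $f\sqsubset g$ iff closure of extended support of $f$ lies in extended support of $g$; $f<g$ iff $f\ll g$ or $f\sqsubset g$. $f^\circ$: if $f$ has $>2$ orbitals, $f$ restricted to the union of its non-extreme orbitals; if $f$ has 1 or 2 orbitals and the left foot of its positive bump is $(r,s)$, a positive bump with support $(r,s)$. $(f,g)$ is a standard pair if $\{f,g\}$ is fast and either $f\ll g$ or ($f\sqsubset g$ and $(g^\circ,f)$ is a standard pair). $\mathcal{S}$ = finite sets of standard functions, pairwise $<$-comparable, each pair $f<g$ a standard pair.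 Oscillation $o(f,g)$ for $f<g$: number of orbitals of $g$ containing a transition point of $f$. Signatures: the signature of $A\in\mathcal S$ is $(f,g)\mapsto o(f,g)$ on pairs $f<g$; functions on pairs of finite linear orders are equivalent if an order-preserving bijection of bases carries one to the other; $\mathbb{S}$ = signatures of members of $\mathcal S$ up to equivalence. $\mathsf{0},\mathsf{1}$: base sizes $0,1$. $\mathsf{A}+\mathsf{B}$: base $A$ followed by $B$, agreeing with $\mathsf{A},\mathsf{B}$ on their bases, value $0$ across. $\exp(\mathsf{A})$: same base, values $\mathsf{A}(i,j)+1$. Inflation: for $\mathsf{A}$ with base $A$ and $m\in A$, $\mathsf{A}^m$ has base $A\cup\{i^m:i<m,\ \mathsf{A}(i,m)>0\}$, new elements placed above all elements of $A$ below $m$ and below $m$, $i^m<j^m$ iff $i<j$; for $i,j<m\le k$ (with $\mathsf{A}(m,m)=\infty$): $\mathsf{A}^m(i^m,j^m)=\mathsf{A}(i,j)$, $\mathsf{A}^m(i,j^m)=\min(\mathsf{A}(j,m)-1,\mathsf{A}(i,m))$, $\mathsf{A}^m(i^m,k)=\min(\mathsf{A}(i,m),\mathsf{A}(m,k))$, other values as in $\mathsf{A}$. $\mathsf{A}\le\mathsf{B}$ iff there is a sequence $\mathsf{B}_0=\mathsf{B},\dots,\mathsf{B}_n=\mathsf{A}$ with each $\mathsf{B}_{i+1}$ (equivalent to) a restriction to a subset of the base of an inflation of $\mathsf{B}_i$. $\mathbb{B}$: smallest class containing $\mathsf{0},\mathsf{1}$ with $\sum_{i<n}\exp(\mathsf{X}_i)\in\mathbb{B}$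 whenever all $\mathsf{X}_i\in\mathbb{B}$; each nonzero member is uniquely $\sum_{i<n}\exp(\mathsf{A}_i)$ with nonzero $\mathsf{A}_i\in\mathbb{B}$. $\rho(\mathsf{0})=0$, $\rho(\mathsf{1})=1$, $\rho(\exp(\mathsf{A}))=\omega^{-1+\rho(\mathsf{A})}$, $\rho(\sum_{i<n}\exp(\mathsf{A}_i))=\sum_{i<n}\rho(\exp(\mathsf{A}_i))$ (ordinal sum), where $-1+\alpha=\beta$ if $\alpha=1+\beta$ and $\omega^{-1+0}:=0$. $\mathbb{R}$: smallest subclass of $\mathbb{B}$ containing $\mathsf{0},\mathsf{1}$ with $\sum_{i<n}\exp(\mathsf{X}_i)\in\mathbb{R}$ whenever all $\mathsf{X}_i\in\mathbb{R}$ and $\rho(\mathsf{X}_{i+1})\le\rho(\mathsf{X}_i)$ for $i<n-1$. *)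

From mathcomp Require Import all_boot.
From Stdlib Require List.
Set Implicit Arguments.
Unset Strict Implicit.
Unset Printing Implicit Defensive.

(* Signatures.  A function on pairs of a finite linear order of size n *)
(* is represented with base {0,...,n-1} (every finite linear order is   *)
(* uniquely order-isomorphic to such an initial segment); only the      *)
(* values sv i j with i < j < sz matter.                                *)
Record Sig := MkSig { sz : nat; sv : nat -> nat -> nat }.

(* equivalence: an order-preserving bijection of bases carries one to   *)
(* the other (between initial segments such a bijection is the identity)*)
Definition sig_eq (A B : Sig) : Prop :=
  sz A = sz B /\ forall i j, i < j -> j < sz A -> sv A i j = sv B i j.

Definition sig0 : Sig := MkSig 0 (fun _ _ => 0).
Definition sig1 : Sig := MkSig 1 (fun _ _ => 0).

Definition sig_add (A B : Sig) : Sig :=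
  MkSig (sz A + sz B)
    (fun i j => if j < sz A then sv A i j
                else if sz A <= i then sv B (i - sz A) (j - sz A) else 0).

Definition sig_exp (A : Sig) : Sig := MkSig (sz A) (fun i j => (sv A i j).+1).

Definition sum_exp (Xs : seq Sig) : Sig :=
  foldr (fun X acc => sig_add (sig_exp X) acc) sig0 Xs.

Definition nonzero (A : Sig) : Prop := 0 < sz A.

(* Inflation A^m (for m < sz A).  The new elements i^m (i < m with     *)
(* A(i,m) > 0) are placed, in the order of i, just below m and above    *)
(* all old elements below m.                                           *)
Definition infl_new (A : Sig) (m : nat) : seq nat :=
  [seq i <- iota 0 m | 0 < sv A i m].

Inductive infl_pt := Old of nat | New of nat.

Definition infl_cls (A : Sig) (m q : nat) : infl_pt :=
  let p := size (infl_new A m) in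
  if q < m then Old q
  else if q < m + p then New (nth 0 (infl_new A m) (q - m))
  else Old (q - p).

Definition inflate (A : Sig) (m : nat) : Sig :=
  MkSig (sz A + size (infl_new A m))
    (fun q1 q2 =>
       match infl_cls A m q1, infl_cls A m q2 with
       | Old a, Old b => sv A a b
       | New i, New j => sv A i j
       | Old a, New j => minn (sv A j m - 1) (sv A a m)
       | New i, Old k => if k == m then sv A i m   (* A(m,m) = infinity *)
                         else minn (sv A i m) (sv A m k)
       end).

(* restriction to a subset of the base, given as an increasing list    *)
Definition restrict (A : Sig) (s : seq nat) : Sig :=
  MkSig (size s) (fun i j => sv A (nth 0 s i) (nth 0 s j)).

Definition valid_subset (A : Sig) (s : seq nat) : Prop :=
  sorted ltn s /\ all (fun x => x < sz A) s.

Definition sig_step (C B : Sig) : Prop :=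
  exists m s, m < sz B /\ valid_subset (inflate B m) s /\
              sig_eq C (restrict (inflate B m) s).

Inductive sig_le : Sig -> Sig -> Prop :=
  | sig_le_refl A B : sig_eq A B -> sig_le A B
  | sig_le_step A C B : sig_le A C -> sig_step C B -> sig_le A B.

(* Ordinals below epsilon_0 in Cantor normal form:                     *)
(* C [:: a1; ...; ak] denotes w^a1 + ... + w^ak  (a1 >= ... >= ak).     *)
Inductive cnf := C of seq cnf.

Fixpoint cmp (x y : cnf) {struct x} : comparison :=
  match x, y with
  | C l1, C l2 =>
    (fix cl (l1 l2 : seq cnf) : comparison :=
       match l1, l2 with
       | [::], [::] => Eq
       | [::], _ :: _ => Lt
       | _ :: _, [::] => Gt
       | a :: l1', b :: l2' =>
         match cmp a b with Eq => cl l1' l2' | c => c end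
       end) l1 l2
  end.

Definition olt (x y : cnf) : Prop := cmp x y = Lt.
Definition oge (x y : cnf) : bool := if cmp x y is Lt then false else true.

Fixpoint cnf_normal (x : cnf) : bool :=
  match x with
  | C l =>
    (fix alln (l : seq cnf) : bool :=
       match l with [::] => true | a :: l' => cnf_normal a && alln l' end) l
    && sorted oge l
  end.

Definition ozero : cnf := C [::].
Definition oone : cnf := C [:: ozero].

Definition oadd (x y : cnf) : cnf :=
  match x, y with
  | C l1, C l2 =>
    match l2 with
    | [::] => C l1
    | b :: _ => C ([seq a <- l1 | oge a b] ++ l2)
    end
  end.

(* -1 + alpha, for alpha >= 1 *)
Definition minus1plus (x : cnf) : cnf :=
  match x with
  | C (C [::] :: l') => C l'
  | _ => x
  end.

(* w^(-1 + alpha), with w^(-1+0) := 0 *)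
Definition omega_m1 (x : cnf) : cnf :=
  match x with
  | C [::] => ozero
  | _ => C [:: minus1plus x]
  end.

Definition osum (xs : seq cnf) : cnf := foldr oadd ozero xs.

(* rho on the class B, as its graph.  Its domain is exactly B (every   *)
(* member of B is 0, 1 or sum_{i<n} exp(A_i) with nonzero A_i in B),    *)
(* and it is single-valued by the unique decomposition of B.           *)
Inductive rho_rel : Sig -> cnf -> Prop :=
  | rho_0 A : sig_eq A sig0 -> rho_rel A ozero
  | rho_1 A : sig_eq A sig1 -> rho_rel A oone
  | rho_sum A (Xs : seq Sig) (bs : seq cnf) :
      List.Forall nonzero Xs ->
      List.Forall2 rho_rel Xs bs ->
      sig_eq A (sum_exp Xs) ->
      rho_rel A (osum (map omega_m1 bs)).

Definition inB (A : Sig) : Prop := exists a, rho_rel A a.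

Inductive inR : Sig -> Prop :=
  | R_0 A : sig_eq A sig0 -> inR A
  | R_1 A : sig_eq A sig1 -> inR A
  | R_sum A (Xs : seq Sig) (bs : seq cnf) :
      List.Forall inR Xs ->
      List.Forall2 rho_rel Xs bs ->
      sorted oge bs ->
      sig_eq A (sum_exp Xs) ->
      inR A.

(* An ordinal x < epsilon_0 with Cantor normal form w^e1 + ... + w^ek has a
   canonical signature [canon x] = exp(X_e1) + ... + exp(X_ek) in R, where X_e
   is canonical for 1 + e; its rank is x.  Then A := canon alpha works, by two
   facts.  First, canon (rho B) <= B for every B in the domain of rho: by
   induction on the decomposition of B, since ordinal addition only drops
   summands and dropping summands goes down.  Second, canon is monotone: where
   the normal forms of alpha <= beta first differ, with exponents a < e, the
   remaining r summands of alpha are below r copies of exp(X_a), these are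
   below exp(X_a + 1) because inflating at the top point doubles the copies
   below it, and X_a + 1 <= X_e by induction since (1 + a) + 1 <= 1 + e. *)

From mathcomp Require Import all_boot zify.
Set Implicit Arguments.
Unset Strict Implicit.
Unset Printing Implicit Defensive.

(** * Equivalence and sums of signatures *)

Lemma sig_eq_refl A : sig_eq A A.
Proof. by split. Qed.

Lemma sig_eq_sym A B : sig_eq A B -> sig_eq B A.
Proof. by case=> eAB e; split=> // i j ij jB; symmetry; apply: e; rewrite ?eAB. Qed.

Lemma sig_eq_trans A B D : sig_eq A B -> sig_eq B D -> sig_eq A D.
Proof.
case=> eAB e [eBD e']; split=> [|i j ij jA]; first by rewrite eAB.
by rewrite e // e' // -eAB.
Qed.

Lemma eq_sig_add A A' B B' :
  sig_eq A A' -> sig_eq B B' -> sig_eq (sig_add A B) (sig_add A' B').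
Proof.
case=> hA eA [hB eB]; split=> [|i j ij /= jl]; rewrite /= -?hA ?hB //.
case: ifP => jA; first exact: eA.
by case: ifP => iA //; apply: eB; lia.
Qed.

Lemma eq_sig_exp A A' : sig_eq A A' -> sig_eq (sig_exp A) (sig_exp A').
Proof. by case=> h e; split=> //= i j ij jl; rewrite e. Qed.

Lemma sig_addA A B D :
  sig_eq (sig_add (sig_add A B) D) (sig_add A (sig_add B D)).
Proof.
split=> [|i j ij jl /=]; rewrite /= ?addnA //.
by repeat case: ifP => ?; rewrite ?subnDA //; lia.
Qed.

Lemma sig_add0l A : sig_eq (sig_add sig0 A) A.
Proof. by split=> //= i j ij jl; rewrite !subn0. Qed.

Lemma sig_add0r A : sig_eq (sig_add A sig0) A.
Proof. by split=> [|i j ij /=]; rewrite /= addn0 // => ->. Qed.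

Lemma sv_add_l P Q a b : b < sz P -> sv (sig_add P Q) a b = sv P a b.
Proof. by move=> /= ->. Qed.

Lemma sv_add_r P Q a b : sz P <= a -> sz P <= b ->
  sv (sig_add P Q) a b = sv Q (a - sz P) (b - sz P).
Proof. by move=> Pa Pb /=; rewrite Pa ifF //; lia. Qed.

Lemma sv_add_shift P Q a b : sv (sig_add P Q) (sz P + a) (sz P + b) = sv Q a b.
Proof. by rewrite sv_add_r ?leq_addr // !addKn. Qed.

Lemma sv_add_cross P Q a b : a < sz P -> sz P <= b -> sv (sig_add P Q) a b = 0.
Proof. by move=> aP Pb /=; rewrite !ifF //; lia. Qed.

(** * Inflation steps as increasing families of points *)

(* [sv (inflate B m) q1 q2] is [infl_val B m (infl_cls B m q1) (infl_cls B m q2)]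
   by conversion. *)
Definition infl_val (B : Sig) (m : nat) (x y : infl_pt) : nat :=
  match x, y with
  | Old a, Old b => sv B a b
  | New i, New j => sv B i j
  | Old a, New j => minn (sv B j m - 1) (sv B a m)
  | New i, Old k => if k == m then sv B i m else minn (sv B i m) (sv B m k)
  end.

Definition infl_in (B : Sig) (m : nat) (x : infl_pt) : bool :=
  match x with
  | Old a => a < sz B
  | New i => i \in infl_new B m
  end.

Definition infl_pos (B : Sig) (m : nat) (x : infl_pt) : nat :=
  match x with
  | Old a => if a < m then a else a + size (infl_new B m)
  | New i => m + index i (infl_new B m)
  end.

Definition infl_chain (B : Sig) (m n : nat) (f : nat -> infl_pt) : Prop :=
  (forall i, i < n -> infl_in B m (f i)) /\
  (forall i j, i < j -> j < n -> infl_pos B m (f i) < infl_pos B m (f j)).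

Definition chain_sig (B : Sig) (m n : nat) (f : nat -> infl_pt) : Sig :=
  MkSig n (fun i j => infl_val B m (f i) (f j)).

Lemma infl_new_lt B m i : i \in infl_new B m -> i < m.
Proof. by rewrite mem_filter mem_iota => /and3P[]. Qed.

Lemma infl_new_gt0 B m i : i \in infl_new B m -> 0 < sv B i m.
Proof. by rewrite mem_filter => /andP[]. Qed.

(* [index_mem], with [size] at [seq nat] as in [infl_pos], so that [lia] sees
   the same atom. *)
Lemma index_infl_new_lt B m i : i \in infl_new B m ->
  index i (infl_new B m) < size (infl_new B m).
Proof. by rewrite index_mem. Qed.

Lemma infl_new_sorted B m : sorted ltn (infl_new B m).
Proof. exact/sorted_filter/iota_ltn_sorted/ltn_trans. Qed.

Lemma infl_pos_lt B m x : m < sz B -> infl_in B m x ->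
  infl_pos B m x < sz B + size (infl_new B m).
Proof.
case: x => [a|i] mB /=; first by case: ifP; lia.
by move/index_infl_new_lt; lia.
Qed.

Lemma infl_clsK B m x : infl_in B m x -> infl_cls B m (infl_pos B m x) = x.
Proof.
rewrite /infl_cls; case: x => [a|i] /= x_in.
  by case: (ltnP a m) => am; [rewrite am | rewrite !ifF ?addnK //; lia].
by rewrite ltnNge leq_addr ltn_add2l index_mem x_in addKn nth_index.
Qed.

Lemma infl_posK B m q : q < sz B + size (infl_new B m) ->
  infl_pos B m (infl_cls B m q) = q.
Proof.
rewrite /infl_cls => qB; case: (ltnP q m) => qm; first by rewrite /= qm.
case: (ltnP q (m + size (infl_new B m))) => qp /=; last by rewrite ifF; lia.
by rewrite index_uniq ?subnKC ?filter_uniq ?iota_uniq // ltn_subLR.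
Qed.

Lemma infl_cls_in B m q : m < sz B -> q < sz B + size (infl_new B m) ->
  infl_in B m (infl_cls B m q).
Proof.
rewrite /infl_cls => mB qB; case: (ltnP q m) => qm /=; first lia.
case: (ltnP q (m + size (infl_new B m))) => qp /=; last lia.
by apply: mem_nth; rewrite ltn_subLR.
Qed.

Lemma sig_step_chain D B : sig_step D B <->
  exists m n f, [/\ m < sz B, infl_chain B m n f & sig_eq D (chain_sig B m n f)].
Proof.
split.
  case=> m [s [mB [[s_sorted s_lt] [eDs e]]]].
  have sB i : i < size s -> nth 0 s i < sz B + size (infl_new B m).
    by move=> ?; apply: (all_nthP 0 s_lt).
  exists m, (size s), (fun i => infl_cls B m (nth 0 s i)); split=> //.
  split=> [i i_s|i j ij js]; first exact: infl_cls_in (sB _ _).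
  rewrite !infl_posK ?sB //; last lia.
  by apply: (sorted_ltn_nth ltn_trans 0 s_sorted); rewrite ?inE //; lia.
case=> m [n [f [mB [f_in f_incr] [eDn e]]]]; rewrite /= in eDn.
pose s := mkseq (fun i => infl_pos B m (f i)) n.
exists m, s; split=> //; split; first split.
- apply: (homo_sorted_in (P := mem (iota 0 n))); last exact: iota_ltn_sorted.
    by move=> i j _; rewrite mem_iota => /andP[_ jn] ij; apply: f_incr.
  exact/allP.
- apply/allP=> x /mapP[i]; rewrite mem_iota => /andP[_ i_n] ->.
  exact/infl_pos_lt/f_in.
split=> [|i j ij jD]; first by rewrite /= /s size_mkseq.
by rewrite e // /= /s !nth_mkseq ?infl_clsK ?f_in //; lia.
Qed.

(** * The order on signatures *)

Lemma sig_eq_le_trans A D B : sig_eq A D -> sig_le D B -> sig_le A B.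
Proof.
move=> eAD DB; elim: DB A eAD => {D B} [D B e|D E B _ IH st] A eA.
  exact/sig_le_refl/(sig_eq_trans eA e).
exact: sig_le_step (IH _ eA) st.
Qed.

Lemma sig_le_empty A B : sz B = 0 -> sig_le A B -> sig_eq A B.
Proof. by move=> + AB; elim: AB => // {}A D {}B _ _ [m [s [+ _]]] B0; rewrite B0. Qed.

Lemma sig_step_restrict D B n g : 0 < sz B ->
  (forall i, i < n -> g i < sz B) ->
  (forall i j, i < j -> j < n -> g i < g j) ->
  sig_eq D (MkSig n (fun i j => sv B (g i) (g j))) -> sig_step D B.
Proof.
move=> B_gt0 g_lt g_incr eDg; apply/sig_step_chain.
exists 0, n, (fun i => Old (g i)); split=> //; split=> [i /g_lt //|i j ij jn].
by rewrite /= !addn0; apply: g_incr.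
Qed.

Lemma sig_lexx A : sig_le A A.
Proof. exact/sig_le_refl/sig_eq_refl. Qed.

Lemma sig_le_trans A D B : sig_le A D -> sig_le D B -> sig_le A B.
Proof.
move=> AD DB; elim: DB A AD => {D B} [D B eDB|D E B _ IH st] A AD.
  have [B0|B_gt0] := posnP (sz B).
    apply/sig_le_refl/(sig_eq_trans _ eDB)/(sig_le_empty _ AD).
    by case: eDB => ->.
  apply: sig_le_step AD _.
  by apply: (@sig_step_restrict D B (sz B) id); case: eDB => // ->.
exact: sig_le_step (IH _ AD) st.
Qed.

Lemma sig_le_eq_trans A D B : sig_le A D -> sig_eq D B -> sig_le A B.
Proof. by move=> AD /sig_le_refl; apply: sig_le_trans. Qed.

Lemma sig0_le X : sig_le sig0 X.
Proof.
have [X0|X_gt0] := posnP (sz X); first by apply: sig_le_refl; split.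
apply: sig_le_step (sig_lexx sig0) _.
by apply: (@sig_step_restrict sig0 X 0 id) => //; split.
Qed.

Lemma sig1_le X : 0 < sz X -> sig_le sig1 X.
Proof.
move=> X_gt0; apply: sig_le_step (sig_lexx sig1) _.
apply: (@sig_step_restrict sig1 X 1 id) => //; try by move=> *; lia.
by split=> //= i j; lia.
Qed.

Lemma infl_new_add_l B Q m : m < sz B -> infl_new (sig_add B Q) m = infl_new B m.
Proof.
move=> mB; apply: eq_in_filter => i; rewrite mem_iota => /andP[_ im].
by rewrite sv_add_l.
Qed.

Lemma infl_in_add_l B Q m x : m < sz B ->
  infl_in B m x -> infl_in (sig_add B Q) m x.
Proof. by case: x => [a|i] mB /=; [lia | rewrite infl_new_add_l]. Qed.

Lemma infl_pos_add_l B Q m x : m < sz B ->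
  infl_pos (sig_add B Q) m x = infl_pos B m x.
Proof. by move=> mB; rewrite /infl_pos infl_new_add_l. Qed.

Lemma infl_val_add_l B Q m x y : m < sz B -> infl_in B m y ->
  infl_val (sig_add B Q) m x y = infl_val B m x y.
Proof.
move=> mB; case: y => [b|j] y_in; last have := infl_new_lt y_in.
  by case: x => [a|i]; rewrite /infl_val !sv_add_l.
by case: x => [a|i] jm; rewrite /infl_val !sv_add_l //; lia.
Qed.

Lemma infl_val_add_cross B Q m x b : m < sz B -> infl_in B m x -> sz B <= b ->
  infl_val (sig_add B Q) m x (Old b) = 0.
Proof.
case: x => [a|i] mB x_in Bb; rewrite /infl_val; first exact: sv_add_cross.
by rewrite ifF ?(@sv_add_cross _ _ m) ?minn0 //; lia.
Qed.

Lemma sig_step_add2r D B Q : sig_step D B -> sig_step (sig_add D Q) (sig_add B Q).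
Proof.
case/sig_step_chain => m [n [f [mB [f_in f_incr] [eDn e]]]]; rewrite /= in eDn.
pose g i := if i < n then f i else Old (sz B + (i - n)).
apply/sig_step_chain; exists m, (n + sz Q), g; split; first by rewrite /=; lia.
  split=> [i iQ|i j ij jQ]; rewrite /g.
    by case: ifP => i_n; [apply/infl_in_add_l/f_in | rewrite /=; lia].
  rewrite !infl_pos_add_l //; case: ifP => i_n; case: ifP => j_n /=.
  - exact: f_incr.
  - by have := infl_pos_lt mB (f_in i i_n); rewrite ifF; lia.
  - lia.
  - by rewrite !ifF; lia.
split=> [|i j ij jQ]; first by rewrite /= eDn.
have {}jQ : j < n + sz Q by move: jQ; rewrite /= eDn.
rewrite [RHS]/= /g.
case: (ltnP i n) => i_n; last first.
  rewrite ifF /infl_val ?sv_add_r ?eDn; try lia.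
  by rewrite !addKn.
case: (ltnP j n) => jn.
  by rewrite sv_add_l ?eDn // infl_val_add_l ?e ?eDn ?f_in.
by rewrite sv_add_cross ?eDn ?infl_val_add_cross ?f_in ?leq_addr.
Qed.

Definition infl_shift (k : nat) (x : infl_pt) : infl_pt :=
  match x with Old a => Old (k + a) | New j => New (k + j) end.

Lemma infl_new_add_r P B m :
  infl_new (sig_add P B) (sz P + m) = map (addn (sz P)) (infl_new B m).
Proof.
rewrite /infl_new iotaD filter_cat add0n.
rewrite (@eq_in_filter _ _ pred0) ?filter_pred0 ?cat0s; last first.
  by move=> i; rewrite mem_iota => /andP[_ iP]; rewrite sv_add_cross ?leq_addr.
rewrite -(addn0 (sz P)) iotaDl addn0 filter_map; congr map.
by apply: eq_filter => j; rewrite -(sv_add_shift P B j m).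
Qed.

Lemma infl_in_shift P B m x : infl_in B m x ->
  infl_in (sig_add P B) (sz P + m) (infl_shift (sz P) x).
Proof.
case: x => [a|j] /=; first lia.
by rewrite infl_new_add_r mem_map //; apply: addnI.
Qed.

Lemma infl_pos_shift P B m x :
  infl_pos (sig_add P B) (sz P + m) (infl_shift (sz P) x) = sz P + infl_pos B m x.
Proof.
rewrite /infl_pos infl_new_add_r size_map; case: x => [a|j] /=.
  by rewrite ltn_add2l; case: ifP; lia.
by rewrite index_map ?addnA //; apply: addnI.
Qed.

Lemma infl_pos_add_low P B m a : a < sz P ->
  infl_pos (sig_add P B) (sz P + m) (Old a) = a.
Proof. by move=> aP /=; rewrite ifT //; lia. Qed.

Lemma infl_val_shift P B m x y :
  infl_val (sig_add P B) (sz P + m) (infl_shift (sz P) x) (infl_shift (sz P) y) =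
  infl_val B m x y.
Proof.
by case: x => [a|i]; case: y => [b|j]; rewrite /infl_val /infl_shift !sv_add_shift ?eqn_add2l.
Qed.

Lemma infl_val_add_low P B m a y : a < sz P ->
  infl_val (sig_add P B) (sz P + m) (Old a) (infl_shift (sz P) y) = 0.
Proof.
move=> aP; case: y => [b|j]; rewrite /infl_val /infl_shift.
  by rewrite sv_add_cross ?leq_addr.
by rewrite (@sv_add_cross _ _ a) ?leq_addr ?minn0.
Qed.

Lemma sig_step_add2l D B P : sig_step D B -> sig_step (sig_add P D) (sig_add P B).
Proof.
case/sig_step_chain => m [n [f [mB [f_in f_incr] [eDn e]]]]; rewrite /= in eDn.
pose g i := if i < sz P then Old i else infl_shift (sz P) (f (i - sz P)).
apply/sig_step_chain; exists (sz P + m), (sz P + n), g; split; first by rewrite /=; lia.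
  split=> [i iPn|i j ij jPn]; rewrite /g.
    by case: ifP => iP; [rewrite /=; lia | apply/infl_in_shift/f_in; lia].
  case: ifP => iP; case: ifP => jP.
  - by rewrite !infl_pos_add_low.
  - by rewrite infl_pos_add_low // infl_pos_shift; lia.
  - lia.
  - by rewrite !infl_pos_shift ltn_add2l; apply: f_incr; lia.
split=> [|i j ij jPn]; first by rewrite /= eDn.
have {}jPn : j < sz P + n by move: jPn; rewrite /= eDn.
rewrite [RHS]/= /g.
case: (ltnP j (sz P)) => jP.
  by rewrite ifT /infl_val ?sv_add_l //; lia.
case: (ltnP i (sz P)) => iP.
  by rewrite sv_add_cross ?infl_val_add_low.
rewrite sv_add_r // infl_val_shift e ?eDn //; lia.
Qed.

Lemma infl_new_exp B m : infl_new (sig_exp B) m = iota 0 m.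
Proof. by apply/all_filterP/allP. Qed.

Lemma index_iota0 i m : i < m -> index i (iota 0 m) = i.
Proof. by move=> im; rewrite -{1}(add0n i) -(nth_iota 0 0 im) index_uniq ?size_iota ?iota_uniq. Qed.

Lemma infl_pos_exp_mono B m x y : infl_in B m x -> infl_in B m y ->
  infl_pos B m x < infl_pos B m y -> infl_pos (sig_exp B) m x < infl_pos (sig_exp B) m y.
Proof.
have idx_mono i j : i \in infl_new B m -> j \in infl_new B m ->
    index i (infl_new B m) < index j (infl_new B m) -> i < j.
  move=> i_in j_in; rewrite -{2}(nth_index 0 i_in) -{2}(nth_index 0 j_in).
  by apply: (sorted_ltn_nth ltn_trans 0 (infl_new_sorted B m)); rewrite inE index_mem.
rewrite /infl_pos infl_new_exp size_iota.
case: x => [a|i]; case: y => [b|j] /= x_in y_in.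
- by case: (ltnP a m); case: (ltnP b m); lia.
- have := index_infl_new_lt y_in.
  by rewrite index_iota0 ?(infl_new_lt y_in) //; case: (ltnP a m); lia.
- rewrite index_iota0 ?(infl_new_lt x_in) //.
  have := infl_new_lt x_in; have := index_infl_new_lt x_in.
  by case: (ltnP b m); lia.
- rewrite !index_iota0 ?(infl_new_lt x_in) ?(infl_new_lt y_in) // !ltn_add2l.
  exact: idx_mono.
Qed.

Lemma infl_val_exp B m x y : infl_in B m y ->
  infl_val (sig_exp B) m x y = (infl_val B m x y).+1.
Proof.
case: x => [a|i]; case: y => [b|j] //= y_in; last by case: eqP => // _; rewrite minnSS.
by have := infl_new_gt0 y_in; case: (sv B j m) => // k _; rewrite !subn1 /= minnSS.
Qed.

Lemma sig_step_exp D B : sig_step D B -> sig_step (sig_exp D) (sig_exp B).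
Proof.
case/sig_step_chain => m [n [f [mB [f_in f_incr] [eDn e]]]]; rewrite /= in eDn.
apply/sig_step_chain; exists m, n, f; split=> //.
  split=> [i /f_in|i j ij jn]; last by apply: infl_pos_exp_mono; rewrite ?f_in ?f_incr //; lia.
  by case: (f i) => //= j /infl_new_lt; rewrite infl_new_exp mem_iota.
split=> [|i j ij jD]; first by rewrite /= eDn.
have jn : j < n by rewrite -eDn.
by rewrite /= infl_val_exp ?f_in // e ?eDn.
Qed.

Lemma sig_le_add2r A B Q : sig_le A B -> sig_le (sig_add A Q) (sig_add B Q).
Proof.
elim=> {A B} [A B e|A D B _ IH st]; last exact: sig_le_step IH (sig_step_add2r Q st).
exact/sig_le_refl/eq_sig_add/sig_eq_refl.
Qed.

Lemma sig_le_add2l A B P : sig_le A B -> sig_le (sig_add P A) (sig_add P B).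
Proof.
elim=> {A B} [A B e|A D B _ IH st]; last exact: sig_le_step IH (sig_step_add2l P st).
exact/sig_le_refl/eq_sig_add/e/sig_eq_refl.
Qed.

Lemma sig_le_add A B D E : sig_le A B -> sig_le D E ->
  sig_le (sig_add A D) (sig_add B E).
Proof. by move=> AB DE; apply: sig_le_trans (sig_le_add2r D AB) (sig_le_add2l B DE). Qed.

Lemma sig_le_exp A B : sig_le A B -> sig_le (sig_exp A) (sig_exp B).
Proof.
elim=> {A B} [A B e|A D B _ IH st]; last exact: sig_le_step IH (sig_step_exp st).
exact/sig_le_refl/eq_sig_exp.
Qed.

Lemma sig_le_summandl A B : sig_le A (sig_add A B).
Proof. exact: sig_eq_le_trans (sig_eq_sym (sig_add0r A)) (sig_le_add2l A (sig0_le B)). Qed.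

Lemma sig_le_summandr A B : sig_le B (sig_add A B).
Proof. exact: sig_eq_le_trans (sig_eq_sym (sig_add0l B)) (sig_le_add2r B (sig0_le A)). Qed.

(** * Copies of a summand *)

Definition sig_top (Y : Sig) : Sig :=
  MkSig (sz Y).+1 (fun i j => if j == sz Y then 1 else sv Y i j).

Lemma eq_sig_top A A' : sig_eq A A' -> sig_eq (sig_top A) (sig_top A').
Proof.
case=> eAA' e; split=> [|i j ij /= jA]; rewrite /= eAA' //.
by case: eqP => // jA'; apply: e; lia.
Qed.

Lemma sig_le_top Y : sig_le Y (sig_top Y).
Proof.
apply: sig_le_step (sig_lexx Y) _.
apply: (@sig_step_restrict Y (sig_top Y) (sz Y) id) => //= [i|]; first lia.
by split=> //= i j ij jY; rewrite ifF //; lia.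
Qed.

Lemma infl_new_top Y : infl_new (sig_top Y) (sz Y) = iota 0 (sz Y).
Proof. by apply/all_filterP/allP => i _ /=; rewrite eqxx. Qed.

(* Inflating at the top point, into which every value is 1, duplicates
   everything below it. *)
Lemma sig_step_top_double Y : sig_step (sig_top (sig_add Y Y)) (sig_top Y).
Proof.
pose f i := if i < sz Y then Old i
            else if i < sz Y + sz Y then New (i - sz Y) else Old (sz Y).
have pos_f i : i <= sz Y + sz Y -> infl_pos (sig_top Y) (sz Y) (f i) = i.
  rewrite /f => iYY; case: (ltnP i (sz Y)) => Yi; first by rewrite /= Yi.
  case: (ltnP i (sz Y + sz Y)) => iYY'; rewrite /infl_pos infl_new_top ?size_iota.
    by rewrite index_iota0; lia.
  by rewrite ltnn; lia.
apply/sig_step_chain; exists (sz Y), (sz Y + sz Y).+1, f; split=> //.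
  split=> [i iYY|i j ij jYY]; last by rewrite !pos_f; lia.
  rewrite /f; case: (ltnP i (sz Y)) => Yi; first by rewrite /=; lia.
  case: (ltnP i (sz Y + sz Y)) => iYY' /=; last lia.
  by rewrite /infl_in infl_new_top mem_iota; lia.
split=> // i j ij /= jYY; rewrite /f.
case: (ltnP j (sz Y)) => Yj.
  by rewrite (_ : i < sz Y) /= ?ifF //; lia.
case: (ltnP j (sz Y + sz Y)) => jYY'.
  rewrite ifF; last lia.
  case: (ltnP i (sz Y)) => Yi /=; first by rewrite eqxx.
  by rewrite ifT /= ?ifF //; lia.
have -> : j = sz Y + sz Y by lia.
rewrite eqxx; case: (ltnP i (sz Y)) => Yi /=; first by rewrite eqxx.
by rewrite ifT /= ?eqxx //; lia.
Qed.

Lemma sig_exp_add1 W : sig_eq (sig_exp (sig_add W sig1)) (sig_top (sig_exp W)).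
Proof.
split=> [|i j ij /=]; rewrite /= addn1 // => jW.
case: (ltnP j (sz W)) => Wj; first by rewrite ifF //; lia.
have -> : j = sz W by lia.
by rewrite eqxx if_same.
Qed.

Definition sig_sum (l : seq Sig) : Sig := foldr sig_add sig0 l.

Lemma sum_expE Xs : sum_exp Xs = sig_sum (map sig_exp Xs).
Proof. by rewrite /sig_sum foldr_map. Qed.

Lemma sig_sum_cat l1 l2 :
  sig_eq (sig_sum (l1 ++ l2)) (sig_add (sig_sum l1) (sig_sum l2)).
Proof.
elim: l1 => [|x l1 IH] /=; first exact/sig_eq_sym/sig_add0l.
exact: sig_eq_trans (eq_sig_add (sig_eq_refl x) IH) (sig_eq_sym (sig_addA _ _ _)).
Qed.

Lemma sig_le_sum l1 l2 : List.Forall2 sig_le l1 l2 -> sig_le (sig_sum l1) (sig_sum l2).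
Proof. by elim=> [|x y l1' l2' xy _ IH] /=; [apply: sig_lexx | apply: sig_le_add]. Qed.

Lemma sig_le_copies_pow2 W t :
  sig_le (sig_top (sig_sum (nseq (2 ^ t) (sig_exp W)))) (sig_exp (sig_add W sig1)).
Proof.
elim: t => [|t IH].
  apply/sig_le_refl/(sig_eq_trans (eq_sig_top (sig_add0r _))).
  exact/sig_eq_sym/sig_exp_add1.
apply: sig_le_trans IH; rewrite expnS mul2n -addnn nseqD.
apply: sig_eq_le_trans (eq_sig_top (sig_sum_cat _ _)) _.
exact: sig_le_step (sig_lexx _) (sig_step_top_double _).
Qed.

Lemma sig_le_copies W r :
  sig_le (sig_sum (nseq r (sig_exp W))) (sig_exp (sig_add W sig1)).
Proof.
have r_le : r <= 2 ^ r by apply/ltnW/ltn_expl.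
apply: sig_le_trans (sig_le_trans (sig_le_top _) (sig_le_copies_pow2 W r)).
rewrite -(subnKC r_le) nseqD.
exact: sig_le_eq_trans (sig_le_summandl _ _) (sig_eq_sym (sig_sum_cat _ _)).
Qed.

(** * Ordinals in Cantor normal form *)

Fixpoint cnf_all (P : cnf -> Prop) (l : seq cnf) : Prop :=
  if l is x :: l' then P x /\ cnf_all P l' else True.

Definition cnf_ind_nested (P : cnf -> Prop)
    (IH : forall l, cnf_all P l -> P (C l)) : forall x, P x :=
  fix F x := let: C l := x in
    IH l ((fix G l : cnf_all P l :=
             if l is y :: l' return cnf_all P l then conj (F y) (G l') else I) l).

(* The inner fixpoint of [cmp] verbatim, so that [cmpE] holds by conversion. *)
Fixpoint cmp_seq (l1 l2 : seq cnf) : comparison :=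
  match l1, l2 with
  | [::], [::] => Eq
  | [::], _ :: _ => Lt
  | _ :: _, [::] => Gt
  | a :: l1', b :: l2' => match cmp a b with Eq => cmp_seq l1' l2' | c => c end
  end.

Lemma cmpE l1 l2 : cmp (C l1) (C l2) = cmp_seq l1 l2.
Proof. by []. Qed.

Lemma cmp_refl x : cmp x x = Eq.
Proof.
elim/cnf_ind_nested: x => l IH; rewrite cmpE.
by elim: l IH => [|a l IHl] //= [-> IHl1]; apply: IHl.
Qed.

Lemma cmp_Eq_eq x y : cmp x y = Eq -> x = y.
Proof.
elim/cnf_ind_nested: x y => l1 IH [l2]; rewrite cmpE.
elim: l1 IH l2 => [|a l1 IHl] IH [|b l2] //=; case: IH => IHa IHl1.
by case E: (cmp a b) => // /(IHl IHl1) [->]; rewrite (IHa _ E).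
Qed.

Lemma cmp_antisym x y : cmp y x = CompOpp (cmp x y).
Proof.
elim/cnf_ind_nested: x y => l1 IH [l2]; rewrite !cmpE.
elim: l1 IH l2 => [|a l1 IHl] IH [|b l2] //=; case: IH => IHa IHl1.
by rewrite (IHa b); case: (cmp a b) => //=; apply: IHl.
Qed.

Lemma cmp_lt_trans x y z : cmp x y = Lt -> cmp y z = Lt -> cmp x z = Lt.
Proof.
elim/cnf_ind_nested: x y z => l1 IH [l2] [l3]; rewrite !cmpE.
elim: l1 IH l2 l3 => [|a l1 IHl] IH [|b l2] [|c l3] //=; case: IH => IHa IHl1.
case E1: (cmp a b) => //; case E2: (cmp b c) => //.
- by rewrite (cmp_Eq_eq E1) (cmp_Eq_eq E2) cmp_refl; apply: IHl.
- by rewrite (cmp_Eq_eq E1) E2.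
- by rewrite -(cmp_Eq_eq E2) E1.
- by rewrite (IHa _ _ E1 E2).
Qed.

Lemma oge_trans : transitive oge.
Proof.
move=> y x z; rewrite /oge.
case E1: (cmp x y) => //; case E2: (cmp y z) => //; case E3: (cmp x z) => //.
- by rewrite (cmp_Eq_eq E1) E2 in E3.
- by rewrite (cmp_Eq_eq E1) E2 in E3.
- by rewrite -(cmp_Eq_eq E2) E1 in E3.
- by move: E2; rewrite (cmp_lt_trans _ E3) // cmp_antisym E1.
Qed.

Lemma cnf_normalE l : cnf_normal (C l) = all cnf_normal l && sorted oge l.
Proof. by rewrite /=; congr andb; elim: l => //= x l ->. Qed.

Lemma oge0 x : oge x ozero.
Proof. by case: x => [[|y l]]. Qed.

Lemma cmp_nlt0 x : cmp x ozero <> Lt.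
Proof. by case: x => [[|y l]]. Qed.

Lemma cmp_ngt0 x : cmp x ozero <> Gt -> x = ozero.
Proof. by case: x => [[|y l]]. Qed.

Lemma cmp_seq_rcons0 la le : cmp_seq la le = Lt -> cmp_seq (la ++ [:: ozero]) le <> Gt.
Proof.
elim: la le => [|a la IH] [|b le] //=; last by case: (cmp a b) => //; apply: IH.
by case: b => [[|? ?]]; case: le.
Qed.

Lemma cmp_seq_split la lb : cmp_seq la lb <> Gt ->
  (exists r, lb = la ++ r) \/
  (exists pre a e ra rb,
    [/\ la = pre ++ a :: ra, lb = pre ++ e :: rb & cmp a e = Lt]).
Proof.
elim: la lb => [|a la IH] lb; first by left; exists lb.
case: lb => [|b lb] //=; case E: (cmp a b) => // le_ab.
- move: (cmp_Eq_eq E) => eab; subst b.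
  case: (IH lb le_ab) => [[r ->]|[pre [a' [e [ra [rb [-> -> lt_a'e]]]]]]].
    by left; exists r.
  by right; exists (a :: pre), a', e, ra, rb.
- by right; exists [::], a, b, la, lb.
Qed.

(* [1 + x] equals [x] unless [x] is finite. *)
Definition one_add (x : cnf) : cnf :=
  match x with
  | C [::] => oone
  | C ((C [::] :: _) as l) => C (ozero :: l)
  | _ => x
  end.

Definition add_one (x : cnf) : cnf := let: C l := x in C (l ++ [:: ozero]).

Lemma cmp_one_add x y : cmp x y <> Gt -> cmp (one_add x) (one_add y) <> Gt.
Proof.
case: x => lx; case: y => ly; rewrite cmpE.
case: ly => [|[[|z lz]] ly']; first by case: lx => // _; rewrite cmp_refl.
  case: lx => [|y lx'] /=; first by case: ly'.
  move=> le_xy; have y0 : y = ozero.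
    by apply: cmp_ngt0; move: le_xy; case: (cmp y ozero).
  by subst y; rewrite /ozero /= -cmpE in le_xy *.
by case: lx => [|[[|v lv]] lx'].
Qed.

Lemma cmp_add_one_one_add a e :
  cmp a e = Lt -> cmp (add_one (one_add a)) (one_add e) <> Gt.
Proof.
case: a => la; case: e => [[|[[|z lz]] le']]; rewrite cmpE => lt_ae.
- by case: la lt_ae.
- case: la lt_ae => [|[[|w lw]] la'] // lt_ae; first by case: le' lt_ae.
  exact: cmp_seq_rcons0 lt_ae.
- case: la lt_ae => [|[[|w lw]] la'] // lt_ae.
  exact: cmp_seq_rcons0 lt_ae.
Qed.

Lemma cnf_normal_one_add x : cnf_normal x -> cnf_normal (one_add x).
Proof. by case: x => [[|[[|z lz]] l]]. Qed.

Lemma cnf_normal_add_one y : cnf_normal y -> cnf_normal (add_one y).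
Proof.
case: y => l; rewrite /add_one !cnf_normalE all_cat => /andP[-> sorted_l] /=.
by case: l sorted_l => //= x l; rewrite cat_path => -> /=; rewrite oge0.
Qed.

Fixpoint cnf_height (x : cnf) : nat :=
  let: C l := x in (foldr maxn 0 (map cnf_height l)).+1.

Lemma cnf_height_in x l : List.In x l -> cnf_height x < cnf_height (C l).
Proof.
elim: l => [|y l IH] //= [->|/IH /=]; rewrite !ltnS; first exact: leq_maxl.
by move/leq_trans; apply; apply: leq_maxr.
Qed.

Lemma cnf_height_gt1 x : x <> ozero -> 1 < cnf_height x.
Proof. by case: x => [[|[l'] l]] //= _; rewrite ltnS leq_max ltnS leq0n. Qed.

Lemma cnf_height_one_add x : cnf_height (one_add x) <= maxn (cnf_height x) 2.
Proof. by case: x => [[|[[|z lz]] l]] /=; lia. Qed.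

Lemma cnf_height_add_one y : cnf_height (add_one y) <= maxn (cnf_height y) 2.
Proof.
case: y => l /=; rewrite map_cat foldr_cat /=.
suff -> : forall a s, foldr maxn a s = maxn a (foldr maxn 0 s) by lia.
by move=> a; elim=> [|x s IH] /=; rewrite ?maxn0 // IH maxnCA.
Qed.

(** * Canonical signatures *)

(* [canon1 x] is a canonical signature for [1 + x] (see [canon1E]); it is
   defined directly so that the recursion stays structural. *)
Fixpoint canon1 (x : cnf) : Sig :=
  let: C l := x in
  match l with
  | [::] => sig1
  | C [::] :: _ => sig_add (sig_exp sig1) (sum_exp (map canon1 l))
  | _ => sum_exp (map canon1 l)
  end.

Definition canon (x : cnf) : Sig := let: C l := x in sum_exp (map canon1 l).

Lemma canon_oone : sig_eq (canon oone) sig1.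
Proof. by split=> //= i j; lia. Qed.

Lemma canon1E x : sig_eq (canon1 x) (canon (one_add x)).
Proof. by case: x => [[|[[|z lz]] l]]; [apply/sig_eq_sym/canon_oone | |]. Qed.

Lemma canon_cat l1 l2 :
  sig_eq (canon (C (l1 ++ l2))) (sig_add (canon (C l1)) (canon (C l2))).
Proof. by rewrite /canon !sum_expE !map_cat; apply: sig_sum_cat. Qed.

Lemma canon_add_one y : sig_eq (canon (add_one y)) (sig_add (canon y) sig1).
Proof.
case: y => l; apply: sig_eq_trans (canon_cat _ _) _.
exact: eq_sig_add (sig_eq_refl _) canon_oone.
Qed.

Lemma canon1_gt0 x : 0 < sz (canon1 x).
Proof.
elim/cnf_ind_nested: x => l IH.
by case: l IH => [|[[|z lz]] l] //= [+ _] => /=; lia.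
Qed.

Lemma omega_m1_one_add e : omega_m1 (one_add e) = C [:: e].
Proof. by case: e => [[|[[|z lz]] l]]. Qed.

Lemma osum_one_add l : sorted oge l -> osum (map omega_m1 (map one_add l)) = C l.
Proof.
elim: l => [|x l IH] //= sorted_xl.
rewrite omega_m1_one_add IH; last exact: path_sorted sorted_xl.
by case: l sorted_xl {IH} => [|y l] //= /andP[->].
Qed.

Lemma oge_one_add x y : oge x y -> oge (one_add x) (one_add y).
Proof.
rewrite /oge; case E: (cmp (one_add x) (one_add y)) => //.
case E1: (cmp x y) => // _; exfalso.
all: by apply: (@cmp_one_add y x); rewrite cmp_antisym ?E1 ?E.
Qed.

Lemma canon_sum_spec l : sorted oge l ->
  cnf_all (fun e => rho_rel (canon1 e) (one_add e) /\ inR (canon1 e)) l ->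
  rho_rel (canon (C l)) (C l) /\ inR (canon (C l)).
Proof.
move=> sorted_l spec_l.
have rho_l : List.Forall2 rho_rel (map canon1 l) (map one_add l).
  by elim: l {sorted_l} spec_l => [|x l IH] //= [[? _] ?]; constructor; auto.
have inR_l : List.Forall inR (map canon1 l).
  by elim: l {sorted_l rho_l} spec_l => [|x l IH] //= [[_ ?] ?]; constructor; auto.
have nz_l : List.Forall nonzero (map canon1 l).
  by elim: l {sorted_l spec_l rho_l inR_l} => [|x l IH] //=; constructor => //; apply: canon1_gt0.
split; first by rewrite -{2}(osum_one_add sorted_l); apply: rho_sum nz_l rho_l (sig_eq_refl _).
apply: (R_sum inR_l rho_l) (sig_eq_refl _).
case: l sorted_l {spec_l rho_l inR_l nz_l} => //= x l.
exact/(homo_path oge_one_add).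
Qed.

Lemma canon_spec x : cnf_normal x ->
  (rho_rel (canon1 x) (one_add x) /\ inR (canon1 x)) /\
  (rho_rel (canon x) x /\ inR (canon x)).
Proof.
have spec1 : rho_rel sig1 oone /\ inR sig1.
  by split; [apply: rho_1 | apply: R_1]; apply: sig_eq_refl.
elim/cnf_ind_nested: x => l IH; rewrite cnf_normalE => /andP[normal_l sorted_l].
have spec_l : cnf_all (fun e => rho_rel (canon1 e) (one_add e) /\ inR (canon1 e)) l.
  elim: l IH normal_l {sorted_l} => [|x l IHl] //= [IHx IHl1] /andP[/IHx[spec_x _] ?].
  by split; last exact: IHl.
have spec := canon_sum_spec sorted_l spec_l; split=> //.
case: l IH normal_l sorted_l spec_l spec => [|[[|z lz]] l] // _ _ sorted_l spec_l _.
by apply: (@canon_sum_spec [:: ozero, C [::] & l]); rewrite /= ?oge0.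
Qed.

(** * The canonical signature is below every signature with the same rank *)

Definition rho_rel_ind (P : Sig -> cnf -> Prop)
  (P0 : forall A, sig_eq A sig0 -> P A ozero)
  (P1 : forall A, sig_eq A sig1 -> P A oone)
  (Psum : forall A Xs bs, List.Forall nonzero Xs ->
        List.Forall2 (fun X b => rho_rel X b /\ P X b) Xs bs ->
        sig_eq A (sum_exp Xs) -> P A (osum (map omega_m1 bs))) :
  forall A b, rho_rel A b -> P A b :=
  fix F A b (H : rho_rel A b) {struct H} : P A b :=
  match H in rho_rel A b return P A b with
  | rho_0 A h => P0 A h
  | rho_1 A h => P1 A h
  | rho_sum A Xs bs nz rho_Xs eA => Psum A Xs bs nz
      ((fix G Xs bs (rho_Xs : List.Forall2 rho_rel Xs bs) {struct rho_Xs} :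
           List.Forall2 (fun X b => rho_rel X b /\ P X b) Xs bs :=
         match rho_Xs in List.Forall2 _ Xs bs
           return List.Forall2 (fun X b => rho_rel X b /\ P X b) Xs bs with
         | List.Forall2_nil => List.Forall2_nil _
         | List.Forall2_cons X b Xs' bs' rho_X rho_Xs' =>
             List.Forall2_cons X b (conj rho_X (F X b rho_X)) (G Xs' bs' rho_Xs')
         end) Xs bs rho_Xs) eA
  end.

Lemma canon_filter (p : pred cnf) l : sig_le (canon (C (filter p l))) (canon (C l)).
Proof.
elim: l => [|x l IH] /=; first exact: sig_lexx.
case: (p x); first exact: sig_le_add2l.
exact: sig_le_trans IH (sig_le_summandr _ _).
Qed.

Lemma canon_oadd x y : sig_le (canon (oadd x y)) (sig_add (canon x) (canon y)).
Proof.
case: x => l1; case: y => [[|b l2]]; first exact/sig_le_refl/sig_eq_sym/sig_add0r.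
exact: sig_eq_le_trans (canon_cat _ _) (sig_le_add2r _ (canon_filter _ _)).
Qed.

Lemma canon1_minus1plus b : b <> ozero -> sig_le (canon1 (minus1plus b)) (canon b).
Proof.
case: b => [[|[[|z lz]] l]] // _; last exact: sig_lexx.
case: l => [|[[|w lw]] l] /=; [exact: sig1_le | exact: sig_lexx | exact: sig_le_summandr].
Qed.

Lemma canon_omega_m1 b X : 0 < sz X -> sig_le (canon b) X ->
  sig_le (canon (omega_m1 b)) (sig_exp X).
Proof.
case: b => [[|x l]] X_gt0 le_bX; first exact: sig0_le.
apply: sig_eq_le_trans (sig_add0r _) (sig_le_exp _).
exact: sig_le_trans (canon1_minus1plus _) le_bX.
Qed.

Lemma canon_osum Xs bs : List.Forall nonzero Xs ->
  List.Forall2 (fun X b => rho_rel X b /\ sig_le (canon b) X) Xs bs ->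
  sig_le (canon (osum (map omega_m1 bs))) (sum_exp Xs).
Proof.
move=> + le_bs; elim: le_bs => [|X b Xs' bs' [_ le_bX] _ IH] /=; first by move=> _; apply: sig_lexx.
move=> nz; inversion nz; subst.
apply: sig_le_trans (canon_oadd _ _) (sig_le_add _ (IH _)) => //.
exact: canon_omega_m1.
Qed.

Lemma canon_rho_le B beta : rho_rel B beta -> sig_le (canon beta) B.
Proof.
elim/rho_rel_ind=> {B beta} [A _|A eA|A Xs bs nz le_bs eA]; first exact: sig0_le.
  exact/sig_le_refl/(sig_eq_trans canon_oone)/sig_eq_sym.
exact: sig_le_eq_trans (canon_osum nz le_bs) (sig_eq_sym eA).
Qed.

(** * Monotonicity of the canonical signature *)

Lemma all_In (T : Type) (p : pred T) l : all p l -> forall x, List.In x l -> p x.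
Proof. by elim: l => //= y l IH /andP[py /IH pl] x [<-|/pl]. Qed.

Lemma canon_le_cons a ra e rb :
  (forall x, List.In x (a :: ra) -> sig_le (canon1 x) (canon1 a)) ->
  sig_le (sig_add (canon1 a) sig1) (canon1 e) ->
  sig_le (canon (C (a :: ra))) (canon (C (e :: rb))).
Proof.
move=> le_xa le_ae; rewrite /canon sum_expE.
have copies : List.Forall2 sig_le (map sig_exp (map canon1 (a :: ra)))
                (nseq (size (a :: ra)) (sig_exp (canon1 a))).
  elim: (a :: ra) le_xa => [|x l IH] le_l /=; first by constructor.
  constructor; first by apply/sig_le_exp/le_l; left.
  by apply: IH => y y_l; apply: le_l; right.
apply: sig_le_trans (sig_le_sum copies) _.
apply: sig_le_trans (sig_le_copies _ _) _.
exact: sig_le_trans (sig_le_exp le_ae) (sig_le_summandl _ _).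
Qed.

Lemma sorted_oge_le_head pre a ra x :
  sorted oge (pre ++ a :: ra) -> List.In x ra -> cmp x a <> Gt.
Proof.
rewrite sorted_cat_cons => /andP[_ /(order_path_min oge_trans)] /all_In ge_a /ge_a.
by rewrite /oge (cmp_antisym a x); case: (cmp a x).
Qed.

(* Induction on a bound [n] for the heights: at the first exponents [a < e]
   where the normal forms differ, [canon_le_cons] needs the claim for
   [1 + x <= 1 + a] (x an exponent after a) and [(1 + a) + 1 <= 1 + e]. *)
Lemma canon_mono n a b : cnf_height a <= n -> cnf_height b <= n ->
  cnf_normal a -> cmp a b <> Gt -> sig_le (canon a) (canon b).
Proof.
elim: n a b => [|n IH] [la] [lb] // ha hb.
rewrite cmpE cnf_normalE => /andP[normal_la sorted_la] /cmp_seq_split.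
case=> [[r ?]|[pre [a [e [ra [rb [? ? lt_ae]]]]]]]; subst lb; last subst la.
  exact: sig_le_eq_trans (sig_le_summandl _ _) (sig_eq_sym (canon_cat _ _)).
have in_la x : List.In x (a :: ra) -> List.In x (pre ++ a :: ra).
  by move=> x_in; apply: List.in_or_app; right.
have h_la x : List.In x (a :: ra) -> cnf_height x <= n.
  by move/in_la/cnf_height_in; lia.
have normal_x x : List.In x (a :: ra) -> cnf_normal x.
  by move/in_la; apply: all_In normal_la x.
have h_e : cnf_height e <= n.
  have e_in : List.In e (pre ++ e :: rb) by apply: List.in_or_app; right; left.
  by have := cnf_height_in e_in; lia.
have n_ge2 : 2 <= n.
  suff : 1 < cnf_height e by lia.
  by apply: cnf_height_gt1 => e0; rewrite e0 in lt_ae; apply: (cmp_nlt0 lt_ae).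
have h1 x : cnf_height x <= n -> cnf_height (one_add x) <= n.
  by have := cnf_height_one_add x; lia.
apply: sig_eq_le_trans (canon_cat _ _) (sig_le_eq_trans _ (sig_eq_sym (canon_cat _ _))).
apply/sig_le_add2l/canon_le_cons => [x x_in|].
  apply: sig_eq_le_trans (canon1E x) (sig_le_eq_trans _ (sig_eq_sym (canon1E a))).
  apply: IH; rewrite ?h1 ?h_la ?cnf_normal_one_add ?normal_x //; try by left.
  apply: cmp_one_add; case: x_in => [->|]; first by rewrite cmp_refl.
  exact: sorted_oge_le_head sorted_la.
apply: sig_eq_le_trans (eq_sig_add (canon1E a) (sig_eq_refl _)) _.
apply: sig_eq_le_trans (sig_eq_sym (canon_add_one _)) (sig_le_eq_trans _ (sig_eq_sym (canon1E e))).
apply: IH; last exact: cmp_add_one_one_add.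
- by have := cnf_height_add_one (one_add a); have := h1 a (h_la a (or_introl erefl)); lia.
- exact: h1 _ h_e.
- by apply/cnf_normal_add_one/cnf_normal_one_add/normal_x; left.
Qed.

Lemma canon_le a b : cnf_normal a -> cmp a b <> Gt -> sig_le (canon a) (canon b).
Proof. exact: canon_mono (leq_maxl _ (cnf_height b)) (leq_maxr (cnf_height a) _). Qed.

Theorem lemma8p4 (B : Sig) (beta alpha : cnf) :
  inR B -> rho_rel B beta ->
  cnf_normal alpha -> olt alpha beta ->
  exists (A : Sig) (gamma : cnf),
    inR A /\ sig_le A B /\ rho_rel A gamma /\ cmp gamma alpha = Eq.
Proof.
move=> _ rho_B normal_alpha lt_alpha_beta.
have [_ [rho_alpha inR_alpha]] := canon_spec normal_alpha.
exists (canon alpha), alpha; split=> //; split; last by split=> //; apply: cmp_refl.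
apply: sig_le_trans (canon_rho_le rho_B).
by apply: canon_le => //; rewrite lt_alpha_beta.
Qed.
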